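(* Let $(\Re, S, V)$ be a $V$-complete vector $S$-metric space, where $V$ is Archimedean. Let $K:\Re\to\Re$ be a map such that $K^2=K\circ K$ is continuous, and let $f:\Re\to\Re$ be a map commuting with $K$ (i.e. $fK=Kf$). Suppose: (i) $fK(\Re)\subseteq K^2(\Re)$; (ii) there is a constant $q\in[0,\tfrac13)$ such that for all $x,y\in\Re$, \[ S(fx,fx,fy)\preceq q\,U(x,x,y) \] for some \[ U(x,x,y)\in\Big\{S(Kx,Kx,Ky),\ S(Kx,Kx,fx),\ S(Ky,Ky,fy),\ \tfrac13\big[S(Kx,Kx,fy)+S(Ky,Ky,fx)\big]\Big\}; \] (iii) $K(\Re)$ or $f(\Re)$ is $V$-complete as a subspace of $\Re$. Then $K$ and $f$ have a unique common fixed point.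
   Context: A vector lattice (Riesz space) $V$ is a real vector space with a partial order $\preceq$ compatible with the linear structure ($p_1 \preceq p_2 \Rightarrow p_1+p_3 \preceq p_2+p_3$ and $\omega p_1 \preceq \omega p_2$ for real $\omega>0$) in which every two-element set has a supremum and an infimum. $V$ is Archimedean if $\inf\{\tfrac{1}{m}v : m \in \mathbb{N}\} = 0$ for every $v \in V^+=\{v\in V: v\succeq 0\}$. For a sequence $(\mu_n)$ in $V$, $\mu_n \downarrow 0$ means $(\mu_n)$ is decreasing with $\inf_n \mu_n = 0$. A vector $S$-metric on a nonempty set $\Re$ is a map $S:\Re\times\Re\times\Re\to V$ such that for all $x,y,z,a\in\Re$: (a) $S(x,y,z)\succeq 0$; (b) $S(x,y,z)=0$ iff $x=y=z$; (c) $S(x,y,z)\preceq S(x,y,a)+S(y,y,a)+S(z,z,a)$. The triple $(\Re,S,V)$ is a vector $S$-metric space. A sequence $(x_n)$ in $\Re$ $V$-converges to $x\in\Re$ (written $x_n \xrightarrow{S,V} x$) if there is a sequence $(\mu_n)$ in $V$ with $\mu_n\downarrow 0$ and $S(x_n,x_n,x)\preceq \mu_n$ for all $n$. It is $V$-Cauchy if there is $(\mu_n)$ in $V$ with $\mu_n\downarrow 0$ and $S(x_n,x_n,x_{n+q})\preceq\mu_n$ for all $n$ and all $q$. The space (or a subset of it) is $V$-complete if every $V$-Cauchy sequence in it $V$-converges to a limit in it. A map $T:\Re\to\Re$ is continuous if $x_n\xrightarrow{S,V}x$ implies $Tx_n\xrightarrow{S,V}Tx$. *)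

From Stdlib Require Import Reals.
Open Scope R_scope.

Record vector_lattice := VectorLattice {
  vl_car :> Type;
  vl_zero : vl_car;
  vl_add : vl_car -> vl_car -> vl_car;
  vl_opp : vl_car -> vl_car;
  vl_scal : R -> vl_car -> vl_car;
  vl_le : vl_car -> vl_car -> Prop;
  vl_addA : forall a b c, vl_add a (vl_add b c) = vl_add (vl_add a b) c;
  vl_addC : forall a b, vl_add a b = vl_add b a;
  vl_add0 : forall a, vl_add vl_zero a = a;
  vl_addN : forall a, vl_add (vl_opp a) a = vl_zero;
  vl_scalA : forall (r s : R) a, vl_scal r (vl_scal s a) = vl_scal (r * s) a;
  vl_scal1 : forall a, vl_scal 1 a = a;
  vl_scalDv : forall r a b, vl_scal r (vl_add a b) = vl_add (vl_scal r a) (vl_scal r b);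
  vl_scalDr : forall r s a, vl_scal (r + s) a = vl_add (vl_scal r a) (vl_scal s a);
  vl_le_refl : forall a, vl_le a a;
  vl_le_anti : forall a b, vl_le a b -> vl_le b a -> a = b;
  vl_le_trans : forall a b c, vl_le a b -> vl_le b c -> vl_le a c;
  vl_le_add : forall a b c, vl_le a b -> vl_le (vl_add a c) (vl_add b c);
  vl_le_scal : forall (w : R) a b, 0 < w -> vl_le a b -> vl_le (vl_scal w a) (vl_scal w b);
  vl_sup2 : forall a b, exists s, vl_le a s /\ vl_le b s /\
              (forall u, vl_le a u -> vl_le b u -> vl_le s u);
  vl_inf2 : forall a b, exists i, vl_le i a /\ vl_le i b /\
              (forall u, vl_le u a -> vl_le u b -> vl_le u i)
}.

Arguments vl_zero {v}.
Arguments vl_add {v}.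
Arguments vl_opp {v}.
Arguments vl_scal {v}.
Arguments vl_le {v}.

Section VL.
Variable V : vector_lattice.

Definition is_infimum (P : V -> Prop) (i : V) : Prop :=
  (forall v, P v -> vl_le i v) /\
  (forall u, (forall v, P v -> vl_le u v) -> vl_le u i).

Definition archimedean : Prop :=
  forall v : V, vl_le vl_zero v ->
    is_infimum (fun w => exists m : nat, (1 <= m)%nat /\ w = vl_scal (/ INR m) v) vl_zero.

Definition decr_to_zero (mu : nat -> V) : Prop :=
  (forall n, vl_le (mu (S n)) (mu n)) /\ is_infimum (fun w => exists n, w = mu n) vl_zero.

Variable X : Type.

Definition is_vector_S_metric (Sm : X -> X -> X -> V) : Prop :=
  (forall x y z, vl_le vl_zero (Sm x y z)) /\
  (forall x y z, Sm x y z = vl_zero <-> (x = y /\ y = z)) /\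
  (forall x y z a, vl_le (Sm x y z)
      (vl_add (Sm x y a) (vl_add (Sm y y a) (Sm z z a)))).

Variable Sm : X -> X -> X -> V.

Definition V_converges (x : nat -> X) (l : X) : Prop :=
  exists mu : nat -> V, decr_to_zero mu /\ forall n, vl_le (Sm (x n) (x n) l) (mu n).

Definition V_Cauchy (x : nat -> X) : Prop :=
  exists mu : nat -> V, decr_to_zero mu /\
    forall n q, vl_le (Sm (x n) (x n) (x (n + q)%nat)) (mu n).

Definition V_complete_subset (A : X -> Prop) : Prop :=
  forall x : nat -> X, (forall n, A (x n)) -> V_Cauchy x ->
    exists l, A l /\ V_converges x l.

Definition V_complete : Prop := V_complete_subset (fun _ => True).

Definition S_continuous (T : X -> X) : Prop :=
  forall (x : nat -> X) (l : X), V_converges x l -> V_converges (fun n => T (x n)) (T l).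

End VL.

Arguments is_infimum {V}.
Arguments decr_to_zero {V}.
Arguments is_vector_S_metric {V X}.
Arguments V_converges {V X}.
Arguments V_Cauchy {V X}.
Arguments V_complete_subset {V X}.
Arguments V_complete {V X}.
Arguments S_continuous {V X}.

(* Pick x_(n+1) with K^2 x_(n+1) = f K x_n, so that u_n := K x_n satisfies
   K u_(n+1) = f u_n.  The contractive condition makes the consecutive
   S-distances of z_n := f u_n shrink by the factor q (in the fourth
   alternative the weight 1/3 absorbs the triangle inequality), so z is
   V-Cauchy because V is Archimedean, and converges to some l.  Continuity of
   K^2 and the contractive condition applied to K^2 u_(n+1) and K l force
   K (K l) = f (K l).  Since q < 1/3, f takes the same value at all
   coincidence points of K and f; as K and f commute, the point K (K l) is
   then a common fixed point, and the only one. *)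

From Stdlib Require Import Reals Lra Lia ClassicalEpsilon.
Open Scope R_scope.

Local Notation "a ⊕ b" := (vl_add a b) (at level 50, left associativity).
Local Notation "r ⊙ a" := (vl_scal r a) (at level 40).
Local Notation "a ≼ b" := (vl_le a b) (at level 70).
Local Notation "0v" := vl_zero.

Section VectorLatticeFacts.
Variable V : vector_lattice.
Implicit Types a b c d : V.

Lemma vl_addr0 a : a ⊕ 0v = a.
Proof. rewrite vl_addC. apply vl_add0. Qed.

Lemma vl_addrN a : a ⊕ vl_opp a = 0v.
Proof. rewrite vl_addC. apply vl_addN. Qed.

Lemma vl_add_perm a b c : a ⊕ b ⊕ c = a ⊕ c ⊕ b.
Proof. rewrite <- !vl_addA, (vl_addC _ b c). reflexivity. Qed.

Lemma vl_add_double a : a ⊕ a = 2 ⊙ a.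
Proof. replace 2 with (1 + 1) by ring. rewrite vl_scalDr, vl_scal1. reflexivity. Qed.

Lemma vl_scal0l a : 0 ⊙ a = 0v.
Proof.
  assert (Hidem : 0 ⊙ a ⊕ 0 ⊙ a = 0 ⊙ a) by (rewrite <- vl_scalDr, Rplus_0_l; reflexivity).
  transitivity (0 ⊙ a ⊕ (0 ⊙ a ⊕ vl_opp (0 ⊙ a))).
  - rewrite vl_addrN, vl_addr0. reflexivity.
  - rewrite vl_addA, Hidem, vl_addrN. reflexivity.
Qed.

Lemma vl_scal0r r : r ⊙ (0v : V) = 0v.
Proof.
  rewrite <- (vl_scal0l 0v), vl_scalA, Rmult_0_r. reflexivity.
Qed.

Lemma vl_le_add_l a b c : a ≼ b -> c ⊕ a ≼ c ⊕ b.
Proof. intros Hab. rewrite (vl_addC _ c a), (vl_addC _ c b). apply vl_le_add, Hab. Qed.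

Lemma vl_le_add2 a b c d : a ≼ b -> c ≼ d -> a ⊕ c ≼ b ⊕ d.
Proof.
  intros Hab Hcd. apply vl_le_trans with (b ⊕ c).
  - apply vl_le_add, Hab.
  - apply vl_le_add_l, Hcd.
Qed.

Lemma vl_le_addl_ge0 a b c : 0v ≼ c -> a ≼ b -> a ≼ c ⊕ b.
Proof. intros Hc Hab. rewrite <- (vl_add0 _ a). apply vl_le_add2; assumption. Qed.

Lemma vl_le_addr_ge0 a b c : 0v ≼ c -> a ≼ b -> a ≼ b ⊕ c.
Proof. intros Hc Hab. rewrite vl_addC. apply vl_le_addl_ge0; assumption. Qed.

Lemma vl_le_scal_ge0 r a b : 0 <= r -> a ≼ b -> r ⊙ a ≼ r ⊙ b.
Proof.
  intros Hr Hab. destruct (Rle_lt_or_eq_dec _ _ Hr) as [Hpos | <-].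
  - apply vl_le_scal; assumption.
  - rewrite !vl_scal0l. apply vl_le_refl.
Qed.

Lemma vl_scal_ge0 r a : 0 <= r -> 0v ≼ a -> 0v ≼ r ⊙ a.
Proof. intros Hr Ha. rewrite <- (vl_scal0r r). apply vl_le_scal_ge0; assumption. Qed.

Lemma vl_le_scal_mono r s a : r <= s -> 0v ≼ a -> r ⊙ a ≼ s ⊙ a.
Proof.
  intros Hrs Ha. replace s with (r + (s - r)) by ring. rewrite vl_scalDr.
  apply vl_le_addr_ge0.
  - apply vl_scal_ge0; [lra | exact Ha].
  - apply vl_le_refl.
Qed.

Lemma vl_le_scal_inv r a b : 0 < r -> r ⊙ a ≼ b -> a ≼ (/ r) ⊙ b.
Proof.
  intros Hr Hab. apply (vl_le_scal _ (/ r)) in Hab; [| apply Rinv_0_lt_compat, Hr].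
  rewrite vl_scalA, Rinv_l, vl_scal1 in Hab by lra. exact Hab.
Qed.

Lemma vl_le_absorb s r a b : 0 <= s < 1 -> a ≼ r ⊙ b ⊕ s ⊙ a -> a ≼ (r / (1 - s)) ⊙ b.
Proof.
  intros Hs Ha. apply (vl_le_add _ _ _ ((- s) ⊙ a)) in Ha.
  rewrite <- vl_addA, <- vl_scalDr, Rplus_opp_r, vl_scal0l, vl_addr0 in Ha.
  rewrite <- (vl_scal1 _ a) in Ha at 1. rewrite <- vl_scalDr in Ha.
  apply vl_le_scal_inv in Ha; [| lra]. rewrite vl_scalA in Ha.
  replace (r / (1 - s)) with (/ (1 + - s) * r) by (field; lra). exact Ha.
Qed.

Lemma vl_le_self_scal s a : 0 <= s < 1 -> a ≼ s ⊙ a -> a ≼ 0v.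
Proof.
  intros Hs Ha. assert (Ha' : a ≼ 0 ⊙ a ⊕ s ⊙ a) by (rewrite vl_scal0l, vl_add0; exact Ha).
  apply vl_le_absorb in Ha'; [| exact Hs].
  replace (0 / (1 - s)) with 0 in Ha' by (field; lra). rewrite vl_scal0l in Ha'. exact Ha'.
Qed.

Lemma decr_to_zero_ge0 (mu : nat -> V) n : decr_to_zero mu -> 0v ≼ mu n.
Proof. intros [_ [Hlb _]]. apply Hlb. exists n. reflexivity. Qed.

Lemma decr_to_zero_le0 (mu : nat -> V) r a :
  decr_to_zero mu -> 0 < r -> (forall n, a ≼ r ⊙ mu n) -> a ≼ 0v.
Proof.
  intros [_ [_ Hglb]] Hr Ha.
  assert (Hinv : (/ r) ⊙ a ≼ 0v).
  { apply Hglb. intros v [n ->].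
    rewrite <- (vl_scal1 _ (mu n)), <- (Rinv_l r), <- vl_scalA by lra.
    apply vl_le_scal_ge0; [left; apply Rinv_0_lt_compat, Hr | apply Ha]. }
  apply (vl_le_scal _ r) in Hinv; [| exact Hr].
  rewrite vl_scalA, Rinv_r, vl_scal1, vl_scal0r in Hinv by lra. exact Hinv.
Qed.

Lemma decr_to_zero_geometric q C d : archimedean V -> 0 <= q < 1 -> 0 <= C -> 0v ≼ d ->
  decr_to_zero (fun n => (C * q ^ n) ⊙ d).
Proof.
  intros Harch Hq HC Hd.
  assert (Hpow : forall n, 0 <= q ^ n) by (intros; apply pow_le; lra).
  split; [| split].
  - intros n. apply vl_le_scal_mono; [| exact Hd]. simpl.
    specialize (Hpow n). apply Rmult_le_compat_l; nra.
  - intros v [n ->]. apply vl_scal_ge0; [apply Rmult_le_pos; auto | exact Hd].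
  - intros u Hu. apply (proj2 (Harch d Hd)). intros v [m [Hm ->]].
    assert (Hm' : 1 <= INR m) by (apply (le_INR 1), Hm).
    (* choose N with q^N < 1 / (m (C + 1)), so that C q^N <= 1/m *)
    destruct (pow_lt_1_zero q ltac:(rewrite Rabs_pos_eq; lra) (/ (INR m * (C + 1))))
      as [N HN]; [apply Rinv_0_lt_compat; nra |].
    specialize (HN N (le_n N)). rewrite Rabs_pos_eq in HN by apply Hpow.
    apply vl_le_trans with ((C * q ^ N) ⊙ d); [apply Hu; exists N; reflexivity |].
    apply vl_le_scal_mono; [| exact Hd].
    assert (HCq : C * q ^ N <= C * / (INR m * (C + 1))) by nra.
    rewrite Rinv_mult in HCq.
    assert (0 < / INR m) by (apply Rinv_0_lt_compat; lra).
    assert (C * / (C + 1) <= 1).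
    { apply Rmult_le_reg_r with (C + 1); [lra |].
      rewrite Rmult_assoc, Rinv_l by lra. lra. }
    nra.
Qed.

End VectorLatticeFacts.

Section VectorSMetric.
Variables (V : vector_lattice) (X : Type) (Sm : X -> X -> X -> V).
Hypothesis HS : is_vector_S_metric Sm.

Lemma S_ge0 x y z : 0v ≼ Sm x y z.
Proof. apply (proj1 HS). Qed.

Lemma S_self x : Sm x x x = 0v.
Proof. apply (proj1 (proj2 HS)). split; reflexivity. Qed.

Lemma S_sym x y : Sm x x y = Sm y y x.
Proof.
  assert (Hle : forall x y, Sm x x y ≼ Sm y y x).
  { intros x' y'. eapply vl_le_trans; [apply (proj2 (proj2 HS) x' x' y' x') |].
    rewrite !S_self, !vl_add0. apply vl_le_refl. }
  apply vl_le_anti; apply Hle.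
Qed.

Lemma S_le_tri x y z : Sm x x z ≼ 2 ⊙ Sm x x y ⊕ Sm y y z.
Proof.
  eapply vl_le_trans; [apply (proj2 (proj2 HS) x x z y) |].
  rewrite vl_addA, vl_add_double, (S_sym z y). apply vl_le_refl.
Qed.

Lemma S_le0_eq x y : Sm x x y ≼ 0v -> x = y.
Proof.
  intros Hle. apply (proj1 (proj1 (proj2 HS) x x y)).
  apply vl_le_anti; [exact Hle | apply S_ge0].
Qed.

Section ContractiveSequence.
Variables (q : R) (z : nat -> X).
Hypothesis Hq : 0 <= q < 1.
Hypothesis Hstep : forall n,
  Sm (z (S n)) (z (S n)) (z (S (S n))) ≼ q ⊙ Sm (z n) (z n) (z (S n)).

Let d n := Sm (z n) (z n) (z (S n)).

Lemma contractive_S_le_pow n : d n ≼ (q ^ n) ⊙ d 0%nat.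
Proof.
  induction n as [| n IHn]; simpl.
  - rewrite vl_scal1. apply vl_le_refl.
  - eapply vl_le_trans; [apply Hstep |]. rewrite <- vl_scalA.
    apply vl_le_scal_ge0; [lra | exact IHn].
Qed.

Lemma contractive_S_le_tail n m :
  Sm (z n) (z n) (z (n + m)%nat) ≼ (2 / (1 - q) * (q ^ n - q ^ n * q ^ m)) ⊙ d 0%nat.
Proof.
  revert n. induction m as [| m IHm]; intros n.
  - rewrite Nat.add_0_r, S_self. simpl.
    replace (2 / (1 - q) * (q ^ n - q ^ n * 1)) with 0 by (field; lra).
    rewrite vl_scal0l. apply vl_le_refl.
  - eapply vl_le_trans; [apply (S_le_tri _ (z (S n))) |].
    replace (n + S m)%nat with (S n + m)%nat by lia.
    eapply vl_le_trans.
    + apply vl_le_add2; [| apply IHm].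
      apply vl_le_scal_ge0; [lra | apply contractive_S_le_pow].
    + rewrite vl_scalA, <- vl_scalDr. apply vl_le_scal_mono; [| apply S_ge0].
      right. simpl. field. lra.
Qed.

Lemma contractive_V_Cauchy : archimedean V -> V_Cauchy Sm z.
Proof.
  intros Harch.
  assert (HC : 0 <= 2 / (1 - q)) by (apply Rmult_le_pos; [lra | left; apply Rinv_0_lt_compat; lra]).
  exists (fun n => (2 / (1 - q) * q ^ n) ⊙ d 0%nat). split.
  - apply decr_to_zero_geometric; [exact Harch | exact Hq | exact HC | apply S_ge0].
  - intros n m. eapply vl_le_trans; [apply contractive_S_le_tail |].
    apply vl_le_scal_mono; [| apply S_ge0].
    assert (0 <= q ^ n) by (apply pow_le; lra).
    assert (0 <= q ^ m) by (apply pow_le; lra).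
    apply Rmult_le_compat_l; nra.
Qed.

End ContractiveSequence.

Section JungckContraction.
Variables (K f : X -> X) (q : R).
Hypothesis Hq : 0 <= q < 1/3.
Hypothesis Hc : forall x y,
  Sm (f x) (f x) (f y) ≼ q ⊙ Sm (K x) (K x) (K y) \/
  Sm (f x) (f x) (f y) ≼ q ⊙ Sm (K x) (K x) (f x) \/
  Sm (f x) (f x) (f y) ≼ q ⊙ Sm (K y) (K y) (f y) \/
  Sm (f x) (f x) (f y) ≼ q ⊙ ((1/3) ⊙ (Sm (K x) (K x) (f y) ⊕ Sm (K y) (K y) (f x))).

Lemma coincidence_value_unique x y : K x = f x -> K y = f y -> f x = f y.
Proof.
  intros Hx Hy. apply S_le0_eq.
  destruct (Hc x y) as [H | [H | [H | H]]]; rewrite ?Hx, ?Hy in H.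
  - eapply vl_le_self_scal; [| exact H]. lra.
  - rewrite S_self, vl_scal0r in H. exact H.
  - rewrite S_self, vl_scal0r in H. exact H.
  - rewrite (S_sym (f y) (f x)), vl_add_double, !vl_scalA in H.
    eapply vl_le_self_scal; [| exact H]. lra.
Qed.

Lemma jungck_S_contraction (u : nat -> X) :
  (forall n, K (u (S n)) = f (u n)) -> forall n,
  Sm (f (u (S n))) (f (u (S n))) (f (u (S (S n)))) ≼ q ⊙ Sm (f (u n)) (f (u n)) (f (u (S n))).
Proof.
  intros Hu n. set (d0 := Sm (f (u n)) (f (u n)) (f (u (S n)))).
  set (d1 := Sm (f (u (S n))) (f (u (S n))) (f (u (S (S n))))).
  assert (Hd0 : 0v ≼ d0) by apply S_ge0.
  destruct (Hc (u (S n)) (u (S (S n)))) as [H | [H | [H | H]]]; rewrite !Hu in H.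
  - exact H.
  - exact H.
  - apply vl_le_trans with 0v; [eapply vl_le_self_scal; [| exact H]; lra |].
    apply vl_scal_ge0; [lra | exact Hd0].
  - rewrite S_self, vl_addr0, vl_scalA in H.
    assert (Htri : d1 ≼ (q * (1/3)) ⊙ (2 ⊙ d0 ⊕ d1)).
    { eapply vl_le_trans; [exact H |]. apply vl_le_scal_ge0; [lra | apply S_le_tri]. }
    rewrite vl_scalDv, vl_scalA in Htri. apply vl_le_absorb in Htri; [| lra].
    eapply vl_le_trans; [exact Htri |]. apply vl_le_scal_mono; [| exact Hd0].
    apply Rmult_le_reg_r with (1 - q * (1/3)); [lra |].
    unfold Rdiv. rewrite Rmult_assoc, Rinv_l by lra. nra.
Qed.

(* If w_n = K p_n, w_(n+1) = f p_n and w_n converges to K b, then every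
   alternative bounds S(w_(n+1), w_(n+1), f b) by q (3 mu_n + D) with
   D := S(K b, K b, f b); the triangle inequality through w_(n+1) then gives
   D <= (2 + 3q) / (1 - q) mu_n for all n. *)
Lemma coincidence_of_limit (w p : nat -> X) (b : X) :
  V_converges Sm w (K b) ->
  (forall n, K (p n) = w n) -> (forall n, f (p n) = w (S n)) ->
  K b = f b.
Proof.
  intros [mu [Hmu Hw]] HKp Hfp. set (t := K b). set (D := Sm t t (f b)).
  assert (Hmu0 : forall n, 0v ≼ mu n) by (intros n; apply (decr_to_zero_ge0 _ _ _ Hmu)).
  assert (HwS : forall n, Sm t t (w (S n)) ≼ mu n).
  { intros n. rewrite S_sym. eapply vl_le_trans; [apply Hw | apply Hmu]. }
  assert (Hwb : forall n, Sm (w n) (w n) (f b) ≼ 2 ⊙ mu n ⊕ D).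
  { intros n. eapply vl_le_trans; [apply (S_le_tri _ t) |].
    apply vl_le_add2; [apply vl_le_scal_ge0; [lra | apply Hw] | apply vl_le_refl]. }
  assert (H3 : forall n, 2 ⊙ mu n ⊕ mu n = 3 ⊙ mu n).
  { intros n. rewrite <- (vl_scal1 _ (mu n)) at 2. rewrite <- vl_scalDr. f_equal. ring. }
  assert (Hstep : forall n, Sm (w (S n)) (w (S n)) (f b) ≼ q ⊙ (3 ⊙ mu n ⊕ D)).
  { intros n. rewrite <- H3.
    destruct (Hc (p n) b) as [H | [H | [H | H]]]; rewrite ?HKp, ?Hfp in H; fold t in H;
      eapply vl_le_trans; try exact H; apply vl_le_scal_ge0; try lra.
    - apply vl_le_addr_ge0; [apply S_ge0 |]. apply vl_le_addl_ge0; [| apply Hw].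
      apply vl_scal_ge0; [lra | apply Hmu0].
    - apply vl_le_addr_ge0; [apply S_ge0 |].
      eapply vl_le_trans; [apply (S_le_tri _ t) |].
      apply vl_le_add2; [apply vl_le_scal_ge0; [lra | apply Hw] | apply HwS].
    - apply vl_le_addl_ge0; [| apply vl_le_refl].
      apply vl_le_addl_ge0; [apply vl_scal_ge0; [lra | apply Hmu0] | apply Hmu0].
    - eapply vl_le_trans.
      + apply vl_le_scal_mono with (s := 1); [lra |].
        apply vl_le_addl_ge0; apply S_ge0.
      + rewrite vl_scal1, vl_add_perm. apply vl_le_add2; [apply Hwb | apply HwS]. }
  apply S_le0_eq, (decr_to_zero_le0 _ mu ((2 + q * 3) / (1 - q)));
    [exact Hmu | apply Rdiv_lt_0_compat; lra |].
  intros n. apply (vl_le_absorb _ q). { lra. }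
  eapply vl_le_trans; [apply (S_le_tri _ (w (S n))) |].
  eapply vl_le_trans; [apply vl_le_add2; [apply vl_le_scal_ge0; [lra | apply HwS] | apply Hstep] |].
  rewrite vl_scalDv, vl_scalA, vl_addA, <- vl_scalDr. apply vl_le_refl.
Qed.

Lemma common_fixed_point_of_coincidence b :
  (forall x, f (K x) = K (f x)) -> K b = f b ->
  exists z, K z = z /\ f z = z /\ (forall w, K w = w -> f w = w -> w = z).
Proof.
  intros Hcomm Hb.
  assert (HKb : K (K b) = f (K b)) by (rewrite Hcomm, Hb; reflexivity).
  assert (Hfix : f (K b) = K b) by (rewrite (coincidence_value_unique _ _ HKb Hb); exact (eq_sym Hb)).
  exists (K b). split; [| split].
  - rewrite HKb. exact Hfix.
  - exact Hfix.
  - intros w HKw Hfw. rewrite <- Hfw, <- Hfix.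
    apply coincidence_value_unique; [congruence | exact HKb].
Qed.

End JungckContraction.

End VectorSMetric.

Lemma jungck_sequence (X : Type) (K f : X -> X) (x0 : X) :
  (forall x, exists y, f (K x) = K (K y)) ->
  exists u : nat -> X, forall n, K (u (S n)) = f (u n).
Proof.
  intros Hrange.
  set (g := fun x => proj1_sig (constructive_indefinite_description _ (Hrange x))).
  assert (Hg : forall x, f (K x) = K (K (g x))) by (intros x; exact (proj2_sig (constructive_indefinite_description _ (Hrange x)))).
  exists (fun n => K (Nat.iter n g x0)). intros n. simpl. symmetry. apply Hg.
Qed.

Theorem theorem2p4 (V : vector_lattice) (X : Type) (Sm : X -> X -> X -> V)
  (K f : X -> X) :
  inhabited X ->
  is_vector_S_metric Sm ->
  V_complete Sm ->
  archimedean V ->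
  S_continuous Sm (fun x => K (K x)) ->
  (forall x, f (K x) = K (f x)) ->
  (* (i) fK(X) ⊆ K^2(X) *)
  (forall x, exists y, f (K x) = K (K y)) ->
  (* (ii) *)
  (exists q : R, 0 <= q < 1/3 /\
    forall x y,
      vl_le (Sm (f x) (f x) (f y)) (vl_scal q (Sm (K x) (K x) (K y))) \/
      vl_le (Sm (f x) (f x) (f y)) (vl_scal q (Sm (K x) (K x) (f x))) \/
      vl_le (Sm (f x) (f x) (f y)) (vl_scal q (Sm (K y) (K y) (f y))) \/
      vl_le (Sm (f x) (f x) (f y))
        (vl_scal q (vl_scal (1/3) (vl_add (Sm (K x) (K x) (f y)) (Sm (K y) (K y) (f x)))))) ->
  (* (iii) *)
  (V_complete_subset Sm (fun z => exists x, z = K x) \/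
   V_complete_subset Sm (fun z => exists x, z = f x)) ->
  exists z, K z = z /\ f z = z /\ (forall w, K w = w -> f w = w -> w = z).
Proof.
  intros [x0] HS Hcomp Harch Hcont Hcomm Hrange [q [Hq Hc]] _.
  destruct (jungck_sequence X K f x0 Hrange) as [u Hu].
  assert (Hz : V_Cauchy Sm (fun n => f (u n))).
  { apply (contractive_V_Cauchy V X Sm HS q); [lra | | exact Harch].
    apply (jungck_S_contraction V X Sm HS K f q Hq Hc u Hu). }
  destruct (Hcomp _ (fun _ => I) Hz) as [l [_ Hl]].
  apply (common_fixed_point_of_coincidence V X Sm HS K f q Hq Hc (K l) Hcomm).
  apply (coincidence_of_limit V X Sm HS K f q Hq Hc
           (fun n => K (K (f (u n)))) (fun n => K (K (u (S n))))).
  - exact (Hcont _ _ Hl).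
  - intros n. rewrite Hu. reflexivity.
  - intros n. simpl. rewrite !Hcomm. reflexivity.
Qed.
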